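(* Let $\Gamma$ be a finite connected $(G,2)$-distance-transitive graph of valency $k\ge2$. If $\gcd(b_1,k)=1$ and $c_2\mid k$, then $\Gamma$ is $(G,2)$-geodesic-transitive. In particular, if $\gcd(b_1,k)=1$ and $\gcd(b_1,c_2)=1$, then $\Gamma$ is $(G,2)$-geodesic-transitive.
   Context: For $G\le\mathrm{Aut}(\Gamma)$, $\Gamma$ is $(G,2)$-distance-transitive if its diameter is at least $2$, $G$ is vertex-transitive and $G_u$ is transitive on $\Gamma(u)$ and $\Gamma_2(u)$ for each $u$. For $u$ and $w$ at distance $i\le2$, $b_i$ (resp. $c_i$) denotes the number of neighbours of $w$ at distance $i+1$ (resp. $i-1$) from $u$; these are independent of $u,w$. A $2$-geodesic is a triple $(u,v,w)$ with $u\sim v\sim w$, $u\ne w$, $u\not\sim w$; $\Gamma$ is $(G,2)$-geodesic-transitive if it is $G$-arc-transitive, non-complete, and $G$ is transitive on $2$-geodesics. *)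

(* A finite simple graph is a symmetric irreflexive relation
   e on a finType T; G is a group of permutations of T acting by automorphisms. *)
From mathcomp Require Import all_boot all_fingroup.
Set Implicit Arguments. Unset Strict Implicit. Unset Printing Implicit Defensive.

Section Graphs.
Variables (T : finType) (e : rel T).

Definition is_aut (g : {perm T}) : Prop := forall x y, e (g x) (g y) = e x y.

Definition nbhd (u : T) : {set T} := [set v | e u v].

Definition dist2 (u : T) : {set T} :=
  [set w | [&& w != u, ~~ e u w & [exists v, e u v && e v w]]].

Definition diam_ge2 : Prop := exists u w, u != w /\ ~~ e u w.

Definition non_complete : Prop := exists u w, u != w /\ ~~ e u w.

Definition connected_graph : Prop := forall x y, connect e x y.

Definition vertex_transitive (G : {set {perm T}}) : Prop :=
  forall u v, exists2 g, g \in G & g u = v.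

Definition stab_transitive_on (G : {set {perm T}}) (u : T) (S : {set T}) : Prop :=
  forall v v', v \in S -> v' \in S -> exists2 g, g \in G & g u = u /\ g v = v'.

Definition two_distance_transitive (G : {set {perm T}}) : Prop :=
  [/\ diam_ge2, vertex_transitive G &
      forall u, stab_transitive_on G u (nbhd u) /\ stab_transitive_on G u (dist2 u)].

Definition arc_transitive (G : {set {perm T}}) : Prop :=
  forall u v u' v', e u v -> e u' v' ->
    exists2 g, g \in G & g u = u' /\ g v = v'.

Definition two_geodesic (u v w : T) : bool :=
  [&& e u v, e v w, u != w & ~~ e u w].

Definition two_geodesic_transitive (G : {set {perm T}}) : Prop :=
  [/\ arc_transitive G, non_complete &
      forall u v w u' v' w', two_geodesic u v w -> two_geodesic u' v' w' ->
        exists2 g, g \in G & [/\ g u = u', g v = v' & g w = w']].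

End Graphs.

From mathcomp Require Import all_boot all_fingroup.

(* Fix u and a 2-geodesic (u, v, w), and let O be the orbit of (v, w) under the
   stabiliser G_u.  Since G_u is transitive on Gamma(u) and on Gamma_2(u), every
   x in Gamma(u) is followed in O by the same number m of vertices y, and every
   y in Gamma_2(u) is preceded by the same number n of vertices x.  Counting O
   and the set of all 2-geodesics from u in two ways gives
   k m = |Gamma_2(u)| n and k b_1 = |Gamma_2(u)| c_2, hence m c_2 = n b_1.  If
   gcd(b_1, c_2) = 1 then b_1 divides m <= b_1, so m = b_1 and O contains every
   2-geodesic from u.  Only gcd(b_1, c_2) = 1 is needed; when c_2 divides k it
   follows from gcd(b_1, k) = 1. *)

Lemma card_set_in_sum {T : finType} (B : {set T}) (P : pred T) :
  #|[set y in B | P y]| = \sum_(y in B) P y.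
Proof.
rewrite -sum1_card big_mkcond [RHS]big_mkcond /=.
by apply: eq_bigr => y _; rewrite inE; case: (y \in B); case: (P y).
Qed.

Lemma double_count_const {aT bT : finType} {A : {set aT}} {B : {set bT}}
    {R : aT -> bT -> bool} {r c : nat} :
    {in A, forall x, #|[set y in B | R x y]| = r} ->
    {in B, forall y, #|[set x in A | R x y]| = c} ->
  #|A| * r = #|B| * c.
Proof.
move=> rowA colB.
transitivity (\sum_(x in A) \sum_(y in B) (R x y : nat)).
  by rewrite -sum_nat_const; apply: eq_bigr => x xA; rewrite -(rowA x xA) card_set_in_sum.
rewrite exchange_big -sum_nat_const; apply: eq_bigr => y yB.
by rewrite -(colB y yB) (card_set_in_sum A (R^~ y)).
Qed.

Lemma coprime_cross_mul_eq (m n b c : nat) :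
  coprime b c -> m * c = n * b -> 0 < m <= b -> m = b.
Proof.
move=> cop_bc mc_nb /andP[m_gt0 le_mb]; apply/eqP; rewrite eqn_leq le_mb /=.
by apply: (dvdn_leq m_gt0); rewrite -(Gauss_dvdl m cop_bc) mc_nb dvdn_mull.
Qed.

Section PairOrbit.
Set Implicit Arguments.
Variables (T : finType) (H : {group {perm T}}) (v w : T).

Definition pair_orbit (x y : T) : bool := [exists h in H, (h v == x) && (h w == y)].

Lemma pair_orbitP x y :
  reflect (exists2 h, h \in H & h v = x /\ h w = y) (pair_orbit x y).
Proof.
apply: (iffP existsP) => [[h /and3P[hH /eqP hv /eqP hw]] | [h hH [hv hw]]].
  by exists h.
by exists h; rewrite hH hv hw !eqxx.
Qed.

Lemma pair_orbit_id : pair_orbit v w.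
Proof. by apply/pair_orbitP; exists 1%g; rewrite ?group1 ?perm1. Qed.

Lemma pair_orbit_act h x y : h \in H -> pair_orbit (h x) (h y) = pair_orbit x y.
Proof.
suff closed h' x' y' : h' \in H -> pair_orbit x' y' -> pair_orbit (h' x') (h' y').
  move=> hH; apply/idP/idP; last exact: closed.
  by move/(closed h^-1%g); rewrite !permK groupV; apply.
move=> h'H /pair_orbitP[g gH [<- <-]]; apply/pair_orbitP.
by exists (g * h')%g; rewrite ?groupM ?permM.
Qed.

Lemma card_pair_orbit_row h x :
  h \in H -> #|[set y | pair_orbit (h x) y]| = #|[set y | pair_orbit x y]|.
Proof.
move=> hH; rewrite -(card_preimset _ (@perm_inj _ h)).
by apply: eq_card => y; rewrite !inE pair_orbit_act.
Qed.

Lemma card_pair_orbit_col h y :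
  h \in H -> #|[set x | pair_orbit x (h y)]| = #|[set x | pair_orbit x y]|.
Proof.
move=> hH; rewrite -(card_preimset _ (@perm_inj _ h)).
by apply: eq_card => x; rewrite !inE pair_orbit_act.
Qed.

End PairOrbit.

Lemma in_astab_perm (T : finType) (G : {group {perm T}}) (u : T) (g : {perm T}) :
  (g \in 'C_G[u | 'P]%g) = (g \in G) && (g u == u).
Proof. by rewrite inE; congr (_ && _); apply/astab1P/eqP. Qed.

Lemma stab_transitive_on_astab {T : finType} {G : {group {perm T}}}
    {u : T} {S : {set T}} {x x' : T} :
    stab_transitive_on G u S -> x \in S -> x' \in S ->
  exists2 h, h \in 'C_G[u | 'P]%g & h x = x'.
Proof.
move=> trans xS x'S; have [h hG [hu hx]] := trans x x' xS x'S.
by exists h; rewrite // in_astab_perm hG hu eqxx.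
Qed.

Section TwoGeodesics.
Set Implicit Arguments.
Variables (T : finType) (e : rel T) (G : {group {perm T}}).
Hypothesis e_sym : symmetric e.
Hypothesis G_aut : forall g, g \in G -> is_aut e g.

Lemma two_geodesic_aut g u v w :
  g \in G -> two_geodesic e (g u) (g v) (g w) = two_geodesic e u v w.
Proof. by move=> gG; rewrite /two_geodesic !(G_aut gG) (inj_eq perm_inj). Qed.

Lemma two_geodesicE u x y :
  two_geodesic e u x y = [&& x \in nbhd e u, y \in nbhd e x & y \in dist2 e u].
Proof.
rewrite /two_geodesic !inE; apply/and4P/and3P => [[ux xy uy not_uy] | [ux xy]].
  by split=> //; rewrite eq_sym uy not_uy; apply/existsP; exists x; rewrite ux xy.
by case/and3P=> yu not_uy _; split; rewrite // eq_sym.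
Qed.

Lemma card_two_geodesic_row u x : x \in nbhd e u ->
  #|[set y in dist2 e u | two_geodesic e u x y]| =
  #|[set y in nbhd e x | y \in dist2 e u]|.
Proof.
move=> ux; apply: eq_card => y.
by rewrite in_set [in RHS]in_set two_geodesicE ux /= andbC -andbA andbb.
Qed.

Lemma card_two_geodesic_col u y : y \in dist2 e u ->
  #|[set x in nbhd e u | two_geodesic e u x y]| = #|[set x in nbhd e y | e u x]|.
Proof.
move=> uy; apply: eq_card => x.
by rewrite in_set [in RHS]in_set two_geodesicE uy andbT !inE (e_sym x) andbA andbb andbC.
Qed.

Lemma arc_transitive_of_stab :
    vertex_transitive G -> (forall u, stab_transitive_on G u (nbhd e u)) ->
  arc_transitive e G.
Proof.
move=> vt nbhd_trans u v u' v' uv u'v'.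
have [g gG gu] := vt u u'.
have gv_nbhd : g v \in nbhd e u' by rewrite inE -gu G_aut.
have v'_nbhd : v' \in nbhd e u' by rewrite inE.
have [h] := stab_transitive_on_astab (nbhd_trans u') gv_nbhd v'_nbhd.
rewrite in_astab_perm => /andP[hG /eqP hu] hv.
by exists (g * h)%g; rewrite ?groupM ?permM ?gu ?hu ?hv.
Qed.

Lemma two_geodesic_transitive_of_stab :
    non_complete e -> vertex_transitive G ->
    (forall u, stab_transitive_on G u (nbhd e u)) ->
    (forall u v w x y, two_geodesic e u v w -> two_geodesic e u x y ->
       pair_orbit 'C_G[u | 'P]%G v w x y) ->
  two_geodesic_transitive e G.
Proof.
move=> nc vt nbhd_trans local; split=> //; first exact: arc_transitive_of_stab.
move=> u v w u' v' w' uvw u'v'w'.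
have [g gG gu'] := vt u' u.
have : pair_orbit 'C_G[u | 'P]%G v w (g v') (g w').
  by apply: local; rewrite // -gu' two_geodesic_aut.
case/pair_orbitP=> h; rewrite in_astab_perm => /andP[hG /eqP hu] [hv hw].
exists (h * g^-1)%g; first by rewrite groupM ?groupV.
by rewrite !permM hu hv hw !permK -gu' permK.
Qed.

Variables (u : T) (b1 c2 : nat).
Hypothesis nbhd_trans : stab_transitive_on G u (nbhd e u).
Hypothesis dist2_trans : stab_transitive_on G u (dist2 e u).
Hypothesis b1_def : {in nbhd e u, forall x, #|[set y in nbhd e x | y \in dist2 e u]| = b1}.
Hypothesis c2_def : {in dist2 e u, forall y, #|[set x in nbhd e y | e u x]| = c2}.
Hypothesis coprime_b1c2 : coprime b1 c2.

Lemma card_nbhd_mul_b1 : #|nbhd e u| * b1 = #|dist2 e u| * c2.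
Proof.
apply: (double_count_const (R := two_geodesic e u)) => [x ux | y uy].
  by rewrite card_two_geodesic_row ?b1_def.
by rewrite card_two_geodesic_col ?c2_def.
Qed.

Variables v w : T.
Hypothesis uvw : two_geodesic e u v w.

Let uv : v \in nbhd e u.
Proof. by move: uvw; rewrite two_geodesicE => /and3P[]. Qed.

Let uw : w \in dist2 e u.
Proof. by move: uvw; rewrite two_geodesicE => /and3P[]. Qed.

Let Gu := 'C_G[u | 'P]%G.
Let R := pair_orbit Gu v w.

Lemma pair_orbit_two_geodesic x y : R x y -> two_geodesic e u x y.
Proof.
case/pair_orbitP=> h; rewrite in_astab_perm => /andP[hG /eqP hu] [<- <-].
by rewrite -[in two_geodesic e u]hu two_geodesic_aut.
Qed.

Lemma pair_orbit_row_sub x :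
  [set y | R x y] \subset [set y in nbhd e x | y \in dist2 e u].
Proof.
apply/subsetP => y; rewrite in_set => /pair_orbit_two_geodesic.
by rewrite two_geodesicE in_set => /and3P[_ -> ->].
Qed.

Lemma card_pair_orbit_row_nbhd x :
  x \in nbhd e u -> #|[set y | R x y]| = #|[set y | R v y]|.
Proof.
by move=> ux; have [h hGu <-] := stab_transitive_on_astab nbhd_trans uv ux;
   rewrite card_pair_orbit_row.
Qed.

Lemma card_pair_orbit_col_dist2 y :
  y \in dist2 e u -> #|[set x | R x y]| = #|[set x | R x w]|.
Proof.
by move=> uy; have [h hGu <-] := stab_transitive_on_astab dist2_trans uw uy;
   rewrite card_pair_orbit_col.
Qed.

Lemma card_pair_orbit_nbhd :
  #|nbhd e u| * #|[set y | R v y]| = #|dist2 e u| * #|[set x | R x w]|.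
Proof.
apply: (double_count_const (R := R)) => [x ux | y uy].
  rewrite -(card_pair_orbit_row_nbhd ux); apply: eq_card => y.
  rewrite in_set [in RHS]in_set andb_idl // => /pair_orbit_two_geodesic.
  by rewrite two_geodesicE => /and3P[].
rewrite -(card_pair_orbit_col_dist2 uy); apply: eq_card => x.
rewrite in_set [in RHS]in_set andb_idl // => /pair_orbit_two_geodesic.
by rewrite two_geodesicE => /and3P[].
Qed.

Lemma card_pair_orbit_row_eq_b1 : #|[set y | R v y]| = b1.
Proof.
have k_gt0 : 0 < #|nbhd e u| by apply/card_gt0P; exists v.
have cross : #|[set y | R v y]| * c2 = #|[set x | R x w]| * b1.
  apply/eqP; rewrite -(eqn_pmul2l k_gt0) mulnA card_pair_orbit_nbhd.
  by rewrite mulnCA card_nbhd_mul_b1 -mulnA mulnCA.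
apply: coprime_cross_mul_eq coprime_b1c2 cross _; apply/andP; split.
  by apply/card_gt0P; exists w; rewrite inE; apply: pair_orbit_id.
by rewrite -(b1_def uv); apply: subset_leq_card (pair_orbit_row_sub v).
Qed.

Lemma two_geodesic_in_pair_orbit x y : two_geodesic e u x y -> R x y.
Proof.
rewrite two_geodesicE => /and3P[ux xy uy].
have row_full : [set y | R x y] = [set y in nbhd e x | y \in dist2 e u].
  apply/eqP; rewrite eqEcard pair_orbit_row_sub /=.
  by rewrite card_pair_orbit_row_nbhd // card_pair_orbit_row_eq_b1 b1_def.
have : y \in [set y in nbhd e x | y \in dist2 e u] by rewrite in_set xy uy.
by rewrite -row_full inE.
Qed.

End TwoGeodesics.

Theorem lemma5p6 (T : finType) (e : rel T) (G : {group {perm T}})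
    (k b1 c2 : nat)
    (e_sym : symmetric e) (e_irr : irreflexive e)
    (G_aut : forall g, g \in G -> is_aut e g)
    (conn : connected_graph e)
    (dt : two_distance_transitive e G)
    (val : forall u, #|nbhd e u| = k) (k_ge2 : 2 <= k)
    (b1_def : forall u w, e u w -> #|[set x in nbhd e w | x \in dist2 e u]| = b1)
    (c2_def : forall u w, w \in dist2 e u -> #|[set x in nbhd e w | e u x]| = c2) :
  (coprime b1 k -> c2 %| k -> two_geodesic_transitive e G) /\
  (coprime b1 k -> coprime b1 c2 -> two_geodesic_transitive e G).
Proof.
have [diam vt local_trans] := dt.
suff geo_trans : coprime b1 c2 -> two_geodesic_transitive e G.
  split=> [cop_b1k dvd_c2k | _]; apply: geo_trans => //.
  exact: coprime_dvdr dvd_c2k cop_b1k.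
move=> cop; apply: two_geodesic_transitive_of_stab => // [u | u v w x y uvw uxy].
  exact: (local_trans u).1.
have [nbhd_trans dist2_trans] := local_trans u.
have b1_nbhd : {in nbhd e u, forall x',
    #|[set y' in nbhd e x' | y' \in dist2 e u]| = b1}.
  by move=> x'; rewrite inE; exact: b1_def.
exact: (two_geodesic_in_pair_orbit G e_sym G_aut nbhd_trans dist2_trans b1_nbhd
          (c2_def u) cop v w uvw x y uxy).
Qed.
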